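(* Let $X=\{a,a+1,\dots,b\}\subseteq\mathbb{N}$ and let $f^\alpha:\mathcal{P}^n\to X$ be the median voter scheme with fixed ballots $\alpha=(\alpha_1,\dots,\alpha_{n-1})\in X^{n-1}$, $\alpha_1\le\dots\le\alpha_{n-1}$. Then $f^\alpha$ is NOM if and only if $\alpha_1\in\{a,a+1\}$ and $\alpha_{n-1}\in\{b-1,b\}$.
   Context: $N=\{1,\dots,n\}$, $n\ge2$; $X=\{a,a+1,\dots,b\}$ with $b=a+(m-1)$, $m\ge2$; $\mathcal{P}$ is the set of all strict linear orders on $X$ (not necessarily single-peaked); $t(P_i)$ the top of $P_i$. The median voter scheme is $f^\alpha(P)=\mathrm{med}\{t(P_1),\dots,t(P_n),\alpha_1,\dots,\alpha_{n-1}\}$, the median of these $2n-1$ numbers. Option set $O(P_i)=\{f(P_i,P_{-i}):P_{-i}\in\mathcal{P}^{n-1}\}$. $P_i'$ is a manipulation of $f$ at $P_i$ if $f(P_i',P_{-i})P_if(P_i,P_{-i})$ for some $P_{-i}$; it is obvious if the $P_i$-worst element of $O(P_i')$ is strictly $P_i$-better than the $P_i$-worst element of $O(P_i)$, or the $P_i$-best element of $O(P_i')$ is strictly $P_i$-better than the $P_i$-best element of $O(P_i)$. $f$ is not obviously manipulable (NOM) if it admits no obvious manipulation. *)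

From mathcomp Require Import all_boot.
Set Implicit Arguments. Unset Strict Implicit. Unset Printing Implicit Defensive.

Definition inX (a b x : nat) : Prop := a <= x <= b.

(* A (strict) preference on X is a boolean relation R on nat, where
   R x y means "x is strictly preferred to y"; only its restriction to X
   matters.  It must be a strict linear order on X. *)
Definition is_pref (a b : nat) (R : rel nat) : Prop :=
  [/\ (forall x, inX a b x -> ~~ R x x),
      (forall x y z, inX a b x -> inX a b y -> inX a b z ->
                     R x y -> R y z -> R x z) &
      (forall x y, inX a b x -> inX a b y -> x <> y -> R x y \/ R y x)].

Definition Xseq (a b : nat) : seq nat := iota a (b - a).+1.

Definition top (a b : nat) (R : rel nat) : nat :=
  head a [seq x <- Xseq a b | all (fun y => (y == x) || R x y) (Xseq a b)].

Definition med (s : seq nat) : nat := nth 0 (sort leq s) (size s)./2.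

Definition profile (n : nat) := 'I_n -> rel nat.

Definition valid_profile (a b n : nat) (P : profile n) : Prop :=
  forall i, is_pref a b (P i).

Definition upd (n : nat) (P : profile n) (i : 'I_n) (Q : rel nat) : profile n :=
  fun j => if j == i then Q else P j.

Definition medvs (a b n : nat) (alpha : seq nat) (P : profile n) : nat :=
  med ([seq top a b (P i) | i <- enum 'I_n] ++ alpha).

Section Manip.
Variables (a b n : nat) (f : profile n -> nat).

Definition option_set (i : 'I_n) (R : rel nat) (x : nat) : Prop :=
  exists P : profile n, valid_profile a b P /\ x = f (upd P i R).

Definition is_worst (R : rel nat) (O : nat -> Prop) (w : nat) : Prop :=
  O w /\ forall y, O y -> y <> w -> R y w.
Definition is_best (R : rel nat) (O : nat -> Prop) (w : nat) : Prop :=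
  O w /\ forall y, O y -> y <> w -> R w y.

Definition manipulation (i : 'I_n) (R R' : rel nat) : Prop :=
  exists P : profile n, valid_profile a b P /\
    R (f (upd P i R')) (f (upd P i R)).

Definition obvious_manipulation (i : 'I_n) (R R' : rel nat) : Prop :=
  manipulation i R R' /\
  ((exists w w', is_worst R (option_set i R) w /\
                 is_worst R (option_set i R') w' /\ R w' w) \/
   (exists w w', is_best R (option_set i R) w /\
                 is_best R (option_set i R') w' /\ R w' w)).

Definition NOM : Prop :=
  forall (i : 'I_n) (R R' : rel nat), is_pref a b R -> is_pref a b R' ->
    ~ obvious_manipulation i R R'.
End Manip.

From mathcomp Require Import all_boot zify.
Set Implicit Arguments. Unset Strict Implicit. Unset Printing Implicit Defensive.

(* If voter i's top is t, then by placing the other n-1 tops anywhere the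
   median can be made to be any x between min(t, alpha_1) and
   max(t, alpha_(n-1)), and nothing else: this interval is the option set.
   Reporting the truth always makes t attainable, so the best option can
   never be improved.  When alpha_1 <= a+1 and alpha_(n-1) >= b-1, every
   option other than t lies in [alpha_1, alpha_(n-1)], which is attainable
   whatever is reported, so the worst option cannot be improved either.
   Conversely, if alpha_1 >= a+2, a voter ranking a first, a+1 last and the
   rest in decreasing order has a+1 as her worst option, while reporting top
   alpha_1 confines the outcome to [alpha_1, alpha_(n-1)], whose worst
   element for her is alpha_1; the case alpha_(n-1) <= b-2 is symmetric. *)

Lemma count_le_nth_sorted (s : seq nat) j : sorted leq s -> j < size s ->
  j < count (fun y => y <= nth 0 s j) s.
Proof.
move=> s_sorted j_lt.
have all_take : all (fun y => y <= nth 0 s j) (take j.+1 s).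
  apply/(all_nthP 0) => k; rewrite size_takel // => k_le; rewrite nth_take //.
  by apply: (sorted_leq_nth leq_trans leqnn) => //; rewrite ?unfold_in /=; lia.
move: all_take; rewrite all_count size_takel // => /eqP <-.
by rewrite -[X in _ <= count _ X](cat_take_drop j.+1 s) count_cat leq_addr.
Qed.

Lemma count_ge_nth_sorted (s : seq nat) j : sorted leq s ->
  size s - j <= count (fun y => nth 0 s j <= y) s.
Proof.
move=> s_sorted.
have all_drop : all (fun y => nth 0 s j <= y) (drop j s).
  apply/(all_nthP 0) => k; rewrite size_drop => k_lt; rewrite nth_drop.
  by apply: (sorted_leq_nth leq_trans leqnn) => //; rewrite ?unfold_in /=; lia.
move: all_drop; rewrite all_count size_drop => /eqP <-.
by rewrite -[X in _ <= count _ X](cat_take_drop j s) count_cat leq_addl.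
Qed.

Section Median.
Variable s : seq nat.

Let count_sort p : count p (sort leq s) = count p s.
Proof. by apply/permP; rewrite perm_sort. Qed.

Let sorted_sort : sorted leq (sort leq s).
Proof. exact: sort_sorted leq_total s. Qed.

Let half_lt_size (p : pred nat) : (size s)./2 < count p s -> (size s)./2 < size (sort leq s).
Proof. by rewrite size_sort => /leq_trans; apply; apply: count_size. Qed.

Lemma med_ge m : (size s)./2 < count (fun y => m <= y) s -> m <= med s.
Proof.
move=> many_ge; rewrite leqNgt; apply/negP => med_lt.
have few_ge : count (fun y => y <= med s) s <= count (predC (fun y => m <= y)) s.
  by apply: sub_count => y /=; lia.
have := count_le_nth_sorted sorted_sort (half_lt_size many_ge).
rewrite count_sort -/(med s).
have := count_predC (fun y => m <= y) s; lia.
Qed.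

Lemma med_le m : (size s)./2 < count (fun y => y <= m) s -> med s <= m.
Proof.
move=> many_le; rewrite leqNgt; apply/negP => lt_med.
have few_le : count (fun y => med s <= y) s <= count (predC (fun y => y <= m)) s.
  by apply: sub_count => y /=; lia.
have := count_ge_nth_sorted (size s)./2 sorted_sort.
rewrite count_sort -/(med s) size_sort.
have := count_predC (fun y => y <= m) s; lia.
Qed.

End Median.

Section Preferences.
Variables a b : nat.

Lemma pref_asym R x y : is_pref a b R -> inX a b x -> inX a b y ->
  R x y -> ~~ R y x.
Proof.
case=> irr trans _ Xx Xy Rxy; apply/negP => Ryx.
by have := irr x Xx; rewrite (trans x y x).
Qed.

Lemma ltn_pref : is_pref a b ltn.
Proof.
split=> [x _|x y z _ _ _|x y _ _ /eqP] /=; first by rewrite ltnn.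
  exact: ltn_trans.
by rewrite neq_ltn => /orP.
Qed.

Lemma gtn_pref : is_pref a b gtn.
Proof.
split=> [x _|x y z _ _ _ /= yx zy|x y _ _ /eqP]; first by rewrite /= ltnn.
  exact: ltn_trans zy yx.
by rewrite neq_ltn => /orP[]; [right|left].
Qed.

Definition topped (c : nat) (R : rel nat) : rel nat :=
  fun x y => if x == c then y != c else (y != c) && R x y.

Lemma topped_pref c R : is_pref a b R -> is_pref a b (topped c R).
Proof.
case=> irr trans total; split=> [x Xx|x y z Xx Xy Xz|x y Xx Xy x_neq_y]; rewrite /topped.
- by case: ifP => [/eqP->|_]; rewrite ?eqxx // (negbTE (irr x Xx)) andbF.
- case: ifP => _; case: (eqVneq y c) => [_|_] //=; first by move=> _ /andP[].
  by move=> Rxy /andP[-> Ryz]; exact: trans Rxy Ryz.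
- case: (eqVneq x c) => [xc|_]; case: (eqVneq y c) => [yc|_] /=.
  + by case: x_neq_y; rewrite xc yc.
  + by left.
  + by right.
  + exact: total.
Qed.

Hypothesis a_le_b : a <= b.

Lemma top_X R : inX a b (top a b R).
Proof.
rewrite /top /inX; set s := filter _ _.
have : all (fun x => a <= x <= b) s.
  by apply/allP => x; rewrite mem_filter /Xseq mem_iota => /andP[_]; lia.
by case: s => [|t l] /=; [rewrite leqnn | case/andP].
Qed.

Lemma mem_Xseq x : (x \in Xseq a b) = (a <= x <= b).
Proof. by rewrite /Xseq mem_iota; apply/idP/idP; move: a_le_b; lia. Qed.

Lemma has_pref_max R (s : seq nat) : is_pref a b R -> s != [::] ->
  (forall x, x \in s -> inX a b x) ->
  has (fun t => all (fun y => (y == t) || R t y) s) s.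
Proof.
move=> R_pref; have [_ trans total] := R_pref.
elim: s => [//|x [|y s] IH] _ sX; first by rewrite /= eqxx.
have sX' z : z \in y :: s -> inX a b z by move=> z_in; apply: sX; rewrite inE z_in orbT.
have Xx : inX a b x by apply: sX; rewrite mem_head.
have /hasP[t t_in t_all] := IH isT sX'; have /allP t_max := t_all.
have Xt := sX' t t_in.
apply/hasP; case Rxt: (R x t).
- exists x; first exact: mem_head.
  apply/allP => z; rewrite inE => /predU1P[->|z_in]; first by rewrite eqxx.
  have /predU1P[->|Rtz] := t_max z z_in; first by rewrite Rxt orbT.
  by rewrite (trans x t z Xx Xt (sX' z z_in) Rxt Rtz) orbT.
- exists t; first by rewrite inE t_in orbT.
  apply/andP; split => //.
  case: (eqVneq x t) => //= x_neq_t.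
  by case: (total x t Xx Xt (elimN eqP x_neq_t)) => //; rewrite Rxt.
Qed.

Lemma top_max R : is_pref a b R ->
  forall y, inX a b y -> y <> top a b R -> R (top a b R) y.
Proof.
move=> R_pref y Xy; rewrite /top.
set p := fun t => all _ _.
have : has p (Xseq a b) by apply: has_pref_max => // x; rewrite mem_Xseq.
rewrite has_filter; have := mem_filter p ^~ (Xseq a b).
case: filter => [|t l] // mem_f _ /= y_neq_t.
have /andP[/allP t_max _] : p t && (t \in Xseq a b) by rewrite -mem_f mem_head.
have y_in : y \in Xseq a b by rewrite mem_Xseq.
by case/predU1P: (t_max y y_in).
Qed.

Lemma top_eq R c : is_pref a b R -> inX a b c ->
  (forall y, inX a b y -> y <> c -> R c y) -> top a b R = c.
Proof.
move=> R_pref Xc c_max; have Xt := top_X R.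
case: (top a b R =P c) => // t_neq_c.
have := top_max R_pref Xc (fun c_eq_t => t_neq_c (esym c_eq_t)).
by rewrite (negbTE (pref_asym R_pref Xc Xt (c_max _ Xt t_neq_c))).
Qed.

Lemma top_topped R c : is_pref a b R -> inX a b c -> top a b (topped c R) = c.
Proof.
move=> R_pref Xc; apply: top_eq => //; first exact: topped_pref.
by move=> y _ /eqP y_neq_c; rewrite /topped eqxx.
Qed.

End Preferences.

Section ObviousManipulation.
Variables (a b n : nat) (f : profile n -> nat) (i : 'I_n).
Hypothesis f_X : forall P, inX a b (f P).

Let option_X (R : rel nat) x : option_set a b f i R x -> inX a b x.
Proof. by case=> P [_ ->]. Qed.

Lemma obvious_manipulation_of_bottom (R R' : rel nat) d w :
  (forall y, inX a b y -> y <> d -> R y d) ->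
  option_set a b f i R d -> ~ option_set a b f i R' d ->
  is_worst R (option_set a b f i R') w ->
  obvious_manipulation a b f i R R'.
Proof.
move=> d_bottom Od not_O'd w_worst; have [O'w _] := w_worst; split.
  have [P [P_valid d_eq]] := Od.
  exists P; split=> //; rewrite -d_eq; apply: d_bottom (f_X _) _ => d_eq'.
  by apply: not_O'd; exists P; rewrite d_eq'.
left; exists d, w; split; first by split=> // y /option_X; exact: d_bottom.
split=> //; apply: d_bottom (option_X O'w) _ => w_eq_d.
by apply: not_O'd; rewrite -w_eq_d.
Qed.

Lemma not_obvious_manipulation (R R' : rel nat) t :
  is_pref a b R -> (forall y, inX a b y -> y <> t -> R t y) ->
  option_set a b f i R t ->
  (forall x, option_set a b f i R x -> x <> t -> option_set a b f i R' x) ->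
  ~ obvious_manipulation a b f i R R'.
Proof.
move=> R_pref t_top Ot O_sub [_ worst_or_best].
have [irr _ _] := R_pref; have Xt := option_X Ot.
have t_unbeaten y : inX a b y -> ~~ R y t.
  move=> Xy; case: (y =P t) => [->|y_neq_t]; first exact: irr.
  exact: pref_asym R_pref Xt Xy (t_top y Xy y_neq_t).
case: worst_or_best => [[w [w' [[Ow _] [[O'w' w'_worst] Rw'w]]]]|
                        [w [w' [[Ow w_best] [[O'w' _] Rw'w]]]]].
- have Xw := option_X Ow; have Xw' := option_X O'w'.
  case: (w =P t) => [w_eq_t|w_neq_t].
    by move: Rw'w; rewrite w_eq_t (negbTE (t_unbeaten _ Xw')).
  have w_neq_w' : w <> w' by move=> w_eq_w'; move: Rw'w; rewrite w_eq_w' (negbTE (irr _ Xw')).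
  have := pref_asym R_pref Xw' Xw Rw'w.
  by rewrite w'_worst //; exact: O_sub.
- have w_eq_t : w = t.
    case: (w =P t) => // w_neq_t.
    by have := t_unbeaten _ (option_X Ow); rewrite w_best // => t_eq_w; case: w_neq_t.
  by move: Rw'w; rewrite w_eq_t (negbTE (t_unbeaten _ (option_X O'w'))).
Qed.

End ObviousManipulation.

Section MedianVoterScheme.
Variables (a b n : nat) (alpha : seq nat).
Hypotheses (n_gt1 : 1 < n) (a_le_b : a <= b).
Hypotheses (size_alpha : size alpha = n.-1) (sorted_alpha : sorted leq alpha).
Hypothesis alpha_X : forall x, x \in alpha -> inX a b x.

Local Notation f := (@medvs a b n alpha).
Local Notation lo := (nth 0 alpha 0).
Local Notation hi := (nth 0 alpha (n - 2)).
Local Notation tops P := [seq top a b (P j) | j <- enum 'I_n].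

Lemma alpha_between x : x \in alpha -> lo <= x <= hi.
Proof.
move=> x_in; have := index_mem x alpha; rewrite x_in size_alpha => idx_lt.
rewrite -(nth_index 0 x_in); apply/andP; split;
  by apply: (sorted_leq_nth leq_trans leqnn); rewrite ?unfold_in //= ?size_alpha; lia.
Qed.

Lemma lo_in_alpha : lo \in alpha.
Proof. by apply: mem_nth; rewrite size_alpha; lia. Qed.

Lemma hi_in_alpha : hi \in alpha.
Proof. by apply: mem_nth; rewrite size_alpha; lia. Qed.

Lemma alpha_bounds : [/\ a <= lo, lo <= hi & hi <= b].
Proof.
have /andP[_ lo_hi] := alpha_between lo_in_alpha.
by move: (alpha_X lo_in_alpha) (alpha_X hi_in_alpha); rewrite /inX; split; lia.
Qed.

Lemma count_alpha_between (p : pred nat) :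
  (forall x, lo <= x <= hi -> p x) -> count p alpha = n.-1.
Proof.
by move=> p_between; rewrite -size_alpha; apply/eqP; rewrite -all_count;
  apply/allP => x /alpha_between; apply: p_between.
Qed.

Lemma count_tops_upd P i R (p : pred nat) : count p (tops (upd P i R)) =
  p (top a b R) + count p [seq top a b (P j) | j <- rem i (enum 'I_n)].
Proof.
have i_in : i \in enum 'I_n by rewrite mem_enum.
rewrite (permP (perm_map _ (perm_to_rem i_in))) /= /upd eqxx; congr (_ + _).
have : i \notin rem i (enum 'I_n) by rewrite mem_rem_uniqF ?enum_uniq.
by elim: (rem i _) => //= j s IH; rewrite inE negb_or eq_sym => /andP[/negbTE -> /IH ->].
Qed.

Lemma count_tops_upd_const P i R (p : pred nat) x : (forall j, top a b (P j) = x) ->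
  count p (tops (upd P i R)) = p (top a b R) + p x * n.-1.
Proof.
move=> P_x; have size_rem_i : size (rem i (enum 'I_n)) = n.-1.
  by rewrite size_rem ?mem_enum // size_enum_ord.
rewrite count_tops_upd -size_rem_i; congr (_ + _).
by elim: (rem i _) => [|j s /= ->]; rewrite ?muln0 // P_x mulnS.
Qed.

Lemma count_tops_upd_gt0 P i R (p : pred nat) :
  p (top a b R) -> 0 < count p (tops (upd P i R)).
Proof. by move=> p_top; rewrite count_tops_upd p_top. Qed.

Let half_size_ballots P : (size (tops P ++ alpha))./2 = n.-1.
Proof. by rewrite size_cat size_map size_enum_ord size_alpha; lia. Qed.

Lemma medvs_ge P m :
  n.-1 < count (fun y => m <= y) (tops P) + count (fun y => m <= y) alpha -> m <= f P.
Proof. by move=> many_ge; apply: med_ge; rewrite half_size_ballots count_cat. Qed.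

Lemma medvs_le P m :
  n.-1 < count (fun y => y <= m) (tops P) + count (fun y => y <= m) alpha -> f P <= m.
Proof. by move=> many_le; apply: med_le; rewrite half_size_ballots count_cat. Qed.

Lemma count_tops_all P (p : pred nat) : (forall R, p (top a b R)) -> count p (tops P) = n.
Proof.
move=> p_top; rewrite -[RHS](size_enum_ord n) -(size_map (fun j => top a b (P j))).
by apply/eqP; rewrite -all_count; apply/allP => _ /mapP[j _ ->].
Qed.

Lemma medvs_X P : inX a b (f P).
Proof.
have [a_lo lo_hi hi_b] := alpha_bounds; have X_top R := top_X a_le_b R.
rewrite /inX; apply/andP; split.
- apply: medvs_ge; rewrite count_tops_all => [|R]; last by case/andP: (X_top R).
  by rewrite count_alpha_between => [|x]; lia.
- apply: medvs_le; rewrite count_tops_all => [|R]; last by case/andP: (X_top R).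
  by rewrite count_alpha_between => [|x]; lia.
Qed.

Lemma medvs_bounds P i R :
  minn (top a b R) lo <= f (upd P i R) <= maxn (top a b R) hi.
Proof.
apply/andP; split.
- apply: medvs_ge; rewrite count_alpha_between => [|x]; last lia.
  by rewrite -add1n leq_add2r count_tops_upd_gt0 ?geq_minl.
- apply: medvs_le; rewrite count_alpha_between => [|x]; last lia.
  by rewrite -add1n leq_add2r count_tops_upd_gt0 ?leq_maxl.
Qed.

Lemma option_setE i R x : option_set a b f i R x <->
  minn (top a b R) lo <= x <= maxn (top a b R) hi.
Proof.
split=> [[P [_ ->]]|x_between]; first exact: medvs_bounds.
have [a_lo lo_hi hi_b] := alpha_bounds; have /andP[a_t t_b] := top_X a_le_b R.
have Xx : inX a b x by rewrite /inX; lia.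
pose P : profile n := fun=> topped x ltn.
have P_x j : top a b (P j) = x by apply: top_topped => //; exact: ltn_pref.
exists P; split; first by move=> j; apply: topped_pref; exact: ltn_pref.
apply/esym/eqP; rewrite eqn_leq; apply/andP; split.
- apply: medvs_le; rewrite (count_tops_upd_const _ _ _ P_x) leqnn /=.
  case: (leqP (top a b R) x) => [_|x_lt_t] /=; first lia.
  have : 0 < count (fun y => y <= x) alpha.
    by rewrite -has_count; apply/hasP; exists lo; [exact: lo_in_alpha|lia].
  lia.
- apply: medvs_ge; rewrite (count_tops_upd_const _ _ _ P_x) leqnn /=.
  case: (leqP x (top a b R)) => [_|t_lt_x] /=; first lia.
  have : 0 < count (fun y => x <= y) alpha.
    by rewrite -has_count; apply/hasP; exists hi; [exact: hi_in_alpha|lia].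
  lia.
Qed.

Lemma medvs_NOM : lo <= a.+1 -> b.-1 <= hi -> NOM a b f.
Proof.
move=> lo_le hi_ge i R R' R_pref _.
have [a_lo lo_hi hi_b] := alpha_bounds.
have /andP[a_t t_b] := top_X a_le_b R; have /andP[a_t' t'_b] := top_X a_le_b R'.
apply: (not_obvious_manipulation medvs_X R_pref (top_max a_le_b R_pref)).
  by apply/option_setE; lia.
by move=> x /option_setE x_between x_neq_t; apply/option_setE; lia.
Qed.

Lemma medvs_not_NOM R d e : is_pref a b R ->
  (forall y, inX a b y -> y <> d -> R y d) ->
  minn (top a b R) lo <= d <= maxn (top a b R) hi -> ~~ (lo <= d <= hi) ->
  lo <= e <= hi -> (forall y, lo <= y <= hi -> y <> e -> R y e) ->
  ~ NOM a b f.
Proof.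
move=> R_pref d_bottom d_option d_out e_between e_worst NOM_f.
have [a_lo lo_hi hi_b] := alpha_bounds.
have top_e : top a b (topped e ltn) = e.
  by apply: top_topped => //; [exact: ltn_pref|rewrite /inX; lia].
have i : 'I_n := Ordinal (ltnW n_gt1).
apply: (NOM_f i R (topped e ltn) R_pref (topped_pref e (ltn_pref a b))).
apply: (obvious_manipulation_of_bottom medvs_X d_bottom (w := e)).
- exact/option_setE.
- by move/option_setE; rewrite top_e; lia.
- split; first by apply/option_setE; rewrite top_e; lia.
  by move=> y /option_setE; rewrite top_e => y_between; apply: e_worst; lia.
Qed.

Lemma medvs_not_NOM_lo : a.+2 <= lo -> ~ NOM a b f.
Proof.
move=> lo_ge; have [a_lo lo_hi hi_b] := alpha_bounds.
have top_a : top a b (topped a gtn) = a.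
  by apply: top_topped => //; [exact: gtn_pref|rewrite /inX; lia].
apply: (medvs_not_NOM (topped_pref a (gtn_pref a b)) (d := a.+1) (e := lo)); rewrite ?top_a; try lia.
- by move=> y; rewrite /inX /topped /=; case: eqP; lia.
- by move=> y; rewrite /topped /=; case: eqP; lia.
Qed.

Lemma medvs_not_NOM_hi : hi.+2 <= b -> ~ NOM a b f.
Proof.
move=> hi_le; have [a_lo lo_hi hi_b] := alpha_bounds.
have top_b : top a b (topped b ltn) = b.
  by apply: top_topped => //; [exact: ltn_pref|rewrite /inX; lia].
apply: (medvs_not_NOM (topped_pref b (ltn_pref a b)) (d := b.-1) (e := hi)); rewrite ?top_b; try lia.
- by move=> y; rewrite /inX /topped /=; case: eqP; lia.
- by move=> y; rewrite /topped /=; case: eqP; lia.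
Qed.

End MedianVoterScheme.

Theorem theorem2 (n a b : nat) (alpha : seq nat) :
  2 <= n -> a < b ->
  size alpha = n.-1 ->
  sorted leq alpha ->
  (forall x, x \in alpha -> inX a b x) ->
  NOM a b (@medvs a b n alpha) <->
  (nth 0 alpha 0 \in [:: a; a.+1]) /\ (nth 0 alpha (n - 2) \in [:: b.-1; b]).
Proof.
move=> n_gt1 /ltnW a_le_b size_alpha sorted_alpha alpha_X.
have [a_lo _ hi_b] := alpha_bounds n_gt1 a_le_b size_alpha sorted_alpha alpha_X.
rewrite !inE; split=> [NOM_f|[lo_near_a hi_near_b]].
- have lo_le : nth 0 alpha 0 <= a.+1.
    rewrite leqNgt; apply/negP => lo_gt.
    exact: (medvs_not_NOM_lo n_gt1 a_le_b size_alpha sorted_alpha alpha_X lo_gt NOM_f).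
  have hi_ge : b.-1 <= nth 0 alpha (n - 2).
    rewrite leqNgt; apply/negP => hi_lt.
    by apply: (medvs_not_NOM_hi n_gt1 a_le_b size_alpha sorted_alpha alpha_X) NOM_f; lia.
  by split; lia.
- by apply: (medvs_NOM n_gt1 a_le_b size_alpha sorted_alpha alpha_X); lia.
Qed.
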